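(* Let $\mathcal X$ be a Banach space, $E\subset\mathcal X$ convex, $\hat\phi_i:\mathcal X\to\mathbb R$ ($i=0,\dots,j$), $\hat\psi:\mathcal X\to\mathbb R^k$ with $k\ge1$. Let $\bar e\in E$ be a minimizer of (OP) with $\hat\phi_0(\bar e)=0$, and assume (C5). Let $y\in T^\flat_E(\bar e)$ satisfy $D\hat\phi_i(\bar e)(y)\le0$ for $i\in\hat I_A$, $D\hat\psi(\bar e)(y)=0$, and $T_E^{\flat(2)}(\bar e,y)\ne\emptyset$. Set $\hat I_0'=\hat I_N\cup\{i\in\hat I_A:D\hat\phi_i(\bar e)(y)<0\}$, $\hat I_0''=\{0,\dots,j\}\setminus\hat I_0'$, $$\mathcal K=\{D\hat\Phi_{\hat I_0''}(\bar e)(x)+\tfrac12D^2\hat\Phi_{\hat I_0''}(\bar e)(y):x\in T_E^{\flat(2)}(\bar e,y)\}\subset\mathbb R^{1+j+k},$$ $$\mathcal K^{\hat\psi}=\{D\hat\psi(\bar e)(x)+\tfrac12D^2\hat\psi(\bar e)(y):x\in T_E^{\flat(2)}(\bar e,y)\}\subset\mathbb R^k.$$ Then $\mathcal K$ and $\mathcal K^{\hat\psi}$ are convex. Moreover, let $Y=(Y_0,\dots,Y_j)^\top$ with $Y_i=D\hat\phi_i(\bar e)(y)$ for $i\in\hat I_A$ and $Y_i=0$ otherwise, and $Z=(-\infty,0)^{j+1}-\{\lambda(\hat\phi(\bar e)+Y):\lambda>0\}$, where $\hat\phi=(\hat\phi_0,\dots,\hat\phi_j)^\top$. If there is no $\ell\in\mathbb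 R^{1+j+k}\setminus\{0\}$ with $$\ell^\top\big(D\hat\Phi_{\hat I_0''}(\bar e)(x)+\tfrac12D^2\hat\Phi_{\hat I_0''}(\bar e)(y)\big)\le\ell^\top(z^\top,0)^\top\quad\forall x\in T_E^{\flat(2)}(\bar e,y),\ \forall z\in Z,$$ then the affine hull $\mathrm{aff}\,\mathcal K^{\hat\psi}$ is a linear subspace of $\mathbb R^k$ of dimension $D(\mathcal K^{\hat\psi})>0$, and there exist $h_1,\dots,h_{D(\mathcal K^{\hat\psi})+1}\in T^{\flat(2)}_E(\bar e,y)$ and $\delta_0>0$ such that $$B_{\mathrm{aff}\,\mathcal K^{\hat\psi}}(\delta_0)\subseteq\mathrm{Int}\,\mathrm{co}\{D\hat\psi(\bar e)(h_l)+\tfrac12D^2\hat\psi(\bar e)(y)\}_{l=1}^{D(\mathcal K^{\hat\psi})+1}$$ and $D\hat\phi_i(\bar e)(h_l)+\frac12D^2\hat\phi_i(\bar e)(y)<0$ for all $l=1,\dots,D(\mathcal K^{\hat\psi})+1$ and all $i\in\hat I_0''$. Here $B_{\mathrm{aff}\,\mathcal K^{\hat\psi}}(\delta_0)$ is the closed ball of radius $\delta_0$ centered at $0$ in that subspace, and Int is the interior relative to that subspace.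
   Context: (OP): minimize $\hat\phi_0(e)$ over $e\in E$ subject to $\hat\phi_i(e)\le0$ ($i=1,\dots,j$) and $\hat\psi(e)=0$. $\hat\Phi=(\hat\phi_0,\dots,\hat\phi_j,\hat\psi_1,\dots,\hat\psi_k)^\top$; for $I\subseteq\{0,\dots,j\}$, $\hat\Phi_I$ is $\hat\Phi$ with the components $\hat\phi_i$, $i\notin I$, replaced by $0$ (same for $D\hat\Phi_I$, $D^2\hat\Phi_I$). $\hat I_A=\{i\in\{1,\dots,j\}:\hat\phi_i(\bar e)=0\}\cup\{0\}$, $\hat I_N=\{i\in\{1,\dots,j\}:\hat\phi_i(\bar e)<0\}$. (C5): $\hat\Phi$ is Fréchet differentiable at $\bar e$ with derivative $D\hat\Phi(\bar e)$ (components $D\hat\phi_i(\bar e)$, $D\hat\psi_l(\bar e)$), and for each $y\in\mathcal X$ there exists a vector $D^2\hat\Phi(\bar e)(y)\in\mathbb R^{1+j+k}$ (components $D^2\hat\phi_i(\bar e)(y)$, $D^2\hat\psi_l(\bar e)(y)$) such that for all $\alpha>0$, $C>0$ there is $\epsilon_0>0$ with $|\hat\Phi(\bar e+\epsilon y+\epsilon^2\eta)-\hat\Phi(\bar e)-\epsilon D\hat\Phi(\bar e)(y)-\epsilon^2D\hat\Phi(\bar e)(\eta)-\frac12\epsilon^2D^2\hat\Phi(\bar e)(y)|\le\alpha\epsilon^2$ for all $\eta$ with $|\eta|\le C$ and $\epsilon\in[0,\epsilon_0]$. Tangent sets: $v\in T_E^\flat(x)$ iff for every $h_n\to0^+$ there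 are $v_n\to v$ with $x+h_nv_n\in E$; for $v\in T_E^\flat(x)$, $w\in T_E^{\flat(2)}(x,v)$ iff for every $h_n\to0^+$ there are $w_n\to w$ with $x+h_nv+h_n^2w_n\in E$. *)

From HB Require Import structures.
From mathcomp Require Import all_boot all_order all_algebra.
From mathcomp Require Import all_classical all_reals all_analysis.
Set Implicit Arguments. Unset Strict Implicit. Unset Printing Implicit Defensive.
Import Order.TTheory GRing.Theory Num.Theory.
Import numFieldNormedType.Exports.
Local Open Scope classical_set_scope.
Local Open Scope ring_scope.

Section Defs.
Variable R : realType.

Definition adj_tangent {X : normedModType R} (E : set X) (x v : X) : Prop :=
  forall h : nat -> R, (forall n, 0 < h n) -> h @ \oo --> 0 ->
  exists vn : nat -> X, vn @ \oo --> v /\ forall n, E (x + h n *: vn n).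

Definition adj_tangent2 {X : normedModType R} (E : set X) (x v w : X) : Prop :=
  forall h : nat -> R, (forall n, 0 < h n) -> h @ \oo --> 0 ->
  exists wn : nat -> X, wn @ \oo --> w /\
    forall n, E (x + h n *: v + (h n ^+ 2) *: wn n).

Definition dotr {n} (l v : 'rV[R]_n) : R := \sum_(i < n) l ord0 i * v ord0 i.

Definition aff_hull {n} (S : set 'rV[R]_n) : set 'rV[R]_n :=
  [set v | exists m (p : 'I_m -> 'rV[R]_n) (t : 'I_m -> R),
     (forall i, S (p i)) /\ \sum_(i < m) t i = 1 /\ v = \sum_(i < m) t i *: p i].

Definition conv_hull {m n} (p : 'I_m -> 'rV[R]_n) : set 'rV[R]_n :=
  [set v | exists t : 'I_m -> R, (forall i, 0 <= t i) /\
     \sum_(i < m) t i = 1 /\ v = \sum_(i < m) t i *: p i].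

Definition rel_int {n} (A S : set 'rV[R]_n) : set 'rV[R]_n :=
  [set v | A v /\ exists r : R, 0 < r /\
     forall w, A w -> `|w - v| < r -> S w].

Definition rel_cball {n} (A : set 'rV[R]_n) (d : R) : set 'rV[R]_n :=
  [set v | A v /\ `|v| <= d].

End Defs.

From HB Require Import structures.
From mathcomp Require Import all_boot all_order all_algebra.
From mathcomp Require Import all_classical all_reals all_analysis.
From mathcomp Require Import ring lra.
Set Implicit Arguments. Unset Strict Implicit. Unset Printing Implicit Defensive.
Import Order.TTheory GRing.Theory Num.Theory.
Import numFieldNormedType.Exports.
Local Open Scope classical_set_scope.
Local Open Scope ring_scope.

(* The set C = {K(x) - (z, 0) : x in T^{flat(2)}_E(eb, y), z in Z} is convex: T^{flat(2)}
   inherits convexity from E, x |-> K(x) is affine and Z is convex.  If no nonzero l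
   separates K from Z x {0}, then no nonzero l satisfies l.c <= 0 on C, so the cone
   generated by C is the whole space, because a proper convex cone of R^n lies in a
   half-space (finite-dimensional Hahn-Banach, by induction on n).  Hence C contains 0
   and absorbs every finite family: rho (0, v_l) lies in C for the k+1 vertices v_l of
   a simplex around 0 in R^k.  The corresponding h_l have K^psi-points rho v_l, so
   aff K^psi = R^k and a small ball lies in the convex hull of these points, while
   their phi-components equal points of Z, which are negative on I0'' because
   phi_i(eb) = D phi_i(eb) y = 0 there. *)

Section Segments.
Variable R : realType.

Definition segment_closed (V : lmodType R) (A : set V) :=
  forall a b (mu : R), 0 <= mu <= 1 -> A a -> A b -> A (mu *: a + (1 - mu) *: b).

Definition affine_map (U V : lmodType R) (f : U -> V) :=
  forall a b (mu : R), f (mu *: a + (1 - mu) *: b) = mu *: f a + (1 - mu) *: f b.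

Lemma convex_setP (V : lmodType R) (A : set V) :
  convex_set (A : set (convex_lmodType V)) <-> segment_closed A.
Proof.
split=> [cA a b mu /andP[mu0 mu1] Aa Ab | cA a b mu].
  by have := cA a b (Itv01 mu0 mu1) (mem_set Aa) (mem_set Ab); rewrite inE.
rewrite !inE => Aa Ab; apply: cA => //.
by apply/andP; split; [exact: ge0 | exact: le1].
Qed.

Lemma affine_map_cst (U V : lmodType R) (c : V) : affine_map (fun _ : U => c).
Proof. by move=> a b mu; rewrite -scalerDl (addrC mu) subrK scale1r. Qed.

Lemma affine_map_linear_add (U V : lmodType R) (L : {linear U -> V}) (c : V) :
  affine_map (fun x => L x + c).
Proof.
move=> a b mu; rewrite linearD !linearZ !scalerDr addrACA.
by rewrite -scalerDl (addrC mu) subrK scale1r.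
Qed.

Lemma affine_map_row (U : lmodType R) n (f : 'I_n -> U -> R) :
  (forall i, affine_map (f i)) -> affine_map (fun x => \row_i f i x).
Proof. by move=> fA a b mu; apply/rowP => i; rewrite !mxE fA. Qed.

Lemma affine_map_row_mx (U : lmodType R) m n (f : U -> 'rV[R]_m) (g : U -> 'rV[R]_n) :
  affine_map f -> affine_map g -> affine_map (fun x => row_mx (f x) (g x)).
Proof. by move=> fA gA a b mu; rewrite fA gA !scale_row_mx add_row_mx. Qed.

Lemma segment_closed_image (U V : lmodType R) (f : U -> V) (A : set U) :
  affine_map f -> segment_closed A -> segment_closed (f @` A).
Proof.
move=> fA cA _ _ mu mu01 [a Aa <-] [b Ab <-].
by exists (mu *: a + (1 - mu) *: b); [exact: cA | exact: fA].
Qed.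

Lemma segment_closed_sub (V : lmodType R) (A B : set V) :
  segment_closed A -> segment_closed B ->
  segment_closed [set a - b | a in A & b in B].
Proof.
move=> cA cB _ _ mu mu01 [a1 Aa1 [b1 Bb1 <-]] [a2 Aa2 [b2 Bb2 <-]].
exists (mu *: a1 + (1 - mu) *: a2); first exact: cA.
exists (mu *: b1 + (1 - mu) *: b2); first exact: cB.
by rewrite !scalerBr opprD addrACA.
Qed.

Lemma segment_closed_orthant_sub_ray n (v : 'rV[R]_n) :
  segment_closed [set z | exists (a : 'rV[R]_n) (lam : R),
    (forall i, a ord0 i < 0) /\ 0 < lam /\ z = a - lam *: v].
Proof.
move=> _ _ mu /andP[mu0 mu1] [a1 [l1 [a1n [l10 ->]]]] [a2 [l2 [a2n [l20 ->]]]].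
exists (mu *: a1 + (1 - mu) *: a2), (mu * l1 + (1 - mu) * l2); split; [|split].
- by move=> i; rewrite !mxE; have := a1n i; have := a2n i; nra.
- nra.
- by rewrite !scalerBr !scalerA (scalerDl v) opprD addrACA.
Qed.

Lemma adj_tangent2_segment_closed (X : normedModType R) (E : set X) (x v : X) :
  segment_closed E -> segment_closed [set w | adj_tangent2 E x v w].
Proof.
move=> cE w1 w2 mu mu01 Tw1 Tw2 h h0 h_cvg.
have [wn1 [wn1_cvg Ewn1]] := Tw1 h h0 h_cvg.
have [wn2 [wn2_cvg Ewn2]] := Tw2 h h0 h_cvg.
exists (fun n => mu *: wn1 n + (1 - mu) *: wn2 n); split.
  by apply: cvgD; apply: cvgZ => //; exact: cvg_cst.
move=> n; have := cE _ _ _ mu01 (Ewn1 n) (Ewn2 n); congr E.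
rewrite (scalerDr mu) (scalerDr (1 - mu)) addrACA -scalerDl (addrC mu) subrK scale1r.
by rewrite scalerDr !scalerA mulrC [(1 - mu) * _]mulrC.
Qed.

End Segments.

Section FiniteHahnBanach.
Variable R : realType.

Lemma dotr_row_mx m n (a c : 'rV[R]_m) (b d : 'rV[R]_n) :
  dotr (row_mx a b) (row_mx c d) = dotr a c + dotr b d.
Proof.
rewrite /dotr big_split_ord /=.
by congr (_ + _); apply: eq_bigr => i _; rewrite ?row_mxEl ?row_mxEr.
Qed.

Lemma dotrD n (l a b : 'rV[R]_n) : dotr l (a + b) = dotr l a + dotr l b.
Proof. by rewrite /dotr -big_split; apply: eq_bigr => i _; rewrite mxE mulrDr. Qed.

Lemma dotrZ n (l a : 'rV[R]_n) t : dotr l (t *: a) = t * dotr l a.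
Proof. by rewrite /dotr mulr_sumr; apply: eq_bigr => i _; rewrite mxE mulrCA. Qed.

Lemma dotrB n (l a b : 'rV[R]_n) : dotr l (a - b) = dotr l a - dotr l b.
Proof. by rewrite -scaleN1r dotrD dotrZ mulN1r. Qed.

Lemma dotr0l n (a : 'rV[R]_n) : dotr 0 a = 0.
Proof. by rewrite /dotr big1 // => i _; rewrite mxE mul0r. Qed.

Lemma dotrNl n (l a : 'rV[R]_n) : dotr (- l) a = - dotr l a.
Proof. by rewrite /dotr -sumrN; apply: eq_bigr => i _; rewrite mxE mulNr. Qed.

Lemma dotr_const_mx (c a : R) : dotr (const_mx c : 'rV[R]_1) (const_mx a) = c * a.
Proof. by rewrite /dotr big_ord1 !mxE. Qed.

Lemma row_mx_lsub_const m (x : 'rV[R]_(1 + m)) :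
  x = row_mx (const_mx (lsubmx x ord0 ord0)) (rsubmx x).
Proof.
have -> : const_mx (lsubmx x ord0 ord0) = lsubmx x by apply/rowP => i; rewrite mxE (ord1 i).
by rewrite hsubmxK.
Qed.

Lemma rV0_eq0 (x : 'rV[R]_0) : x = 0.
Proof. by apply/rowP => -[]. Qed.

Section LinearMajorant.
Variables (m : nat) (Q : 'rV[R]_(1 + m) -> R -> Prop).
Hypothesis Qadd : forall x s y t, Q x s -> Q y t -> Q (x + y) (s + t).
Hypothesis Qscale : forall x s a, 0 < a -> Q x s -> Q (a *: x) (a * s).
Hypothesis Qtotal : forall x, exists s, Q x s.
Variable L' : 'rV[R]_m.
Hypothesis L'_majorant : forall x' s, Q (row_mx 0 x') s -> s <= dotr L' x'.

Let slope_pos := [set c | exists a x' s, 0 < a /\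
  Q (row_mx (const_mx a) x') s /\ c = (s - dotr L' x') / a].
Let slope_neg := [set c | exists a x' s, a < 0 /\
  Q (row_mx (const_mx a) x') s /\ c = (s - dotr L' x') / a].

Let slope_pos_le_neg a b : slope_pos a -> slope_neg b -> a <= b.
Proof.
move=> [a1 [x1 [s1 [a10 [Q1 ->]]]]] [a2 [x2 [s2 [a20 [Q2 ->]]]]].
have a1V : 0 < a1^-1 by rewrite invr_gt0.
have a2V : 0 < (- a2)^-1 by rewrite invr_gt0 oppr_gt0.
have := Qadd (Qscale a1V Q1) (Qscale a2V Q2).
rewrite !scale_row_mx add_row_mx.
have -> : a1^-1 *: (const_mx a1 : 'rV[R]_1) + (- a2)^-1 *: const_mx a2 = 0.
  apply/rowP => i; rewrite !mxE mulVf ?gt_eqF // invrN mulNr mulVf ?lt_eqF //.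
  by rewrite subrr.
move=> /L'_majorant; rewrite dotrD !dotrZ.
have -> : a2^-1 = - (- a2)^-1 by rewrite invrN opprK.
by set p := a1^-1; set q := (- a2)^-1; nra.
Qed.

(* The one-step extension of Hahn-Banach: [c] is any value between the slopes
   coming from [a > 0] and those coming from [a < 0]. *)
Lemma linear_majorant_extension :
  exists c, forall a x' s, Q (row_mx (const_mx a) x') s -> s <= c * a + dotr L' x'.
Proof.
have [s1 Qs1] := Qtotal (row_mx (const_mx 1) 0).
have [s2 Qs2] := Qtotal (row_mx (const_mx (-1)) 0).
have pos_s1 : slope_pos ((s1 - dotr L' 0) / 1) by exists 1, 0, s1; rewrite ltr01.
have neg_s2 : slope_neg ((s2 - dotr L' 0) / (-1)) by exists (-1), 0, s2; rewrite ltrN10.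
have pos_ub : has_ubound slope_pos.
  by exists ((s2 - dotr L' 0) / (-1)) => a /slope_pos_le_neg; apply.
exists (sup slope_pos) => a x' s Qs.
have [a0|a0|a0] := ltgtP a 0.
- have : sup slope_pos <= (s - dotr L' x') / a.
    apply: ge_sup; first by exists ((s1 - dotr L' 0) / 1).
    by move=> c /slope_pos_le_neg; apply; exists a, x', s.
  by rewrite ler_ndivlMr // => H; lra.
- have : (s - dotr L' x') / a <= sup slope_pos by apply: ub_le_sup => //; exists a, x', s.
  by rewrite ler_pdivrMr // => H; lra.
- rewrite a0 mulr0 add0r; apply: L'_majorant.
  by move: Qs; rewrite a0; congr (Q (row_mx _ _) _); apply/rowP => i; rewrite !mxE.
Qed.

End LinearMajorant.

Lemma exists_linear_majorant m (Q : 'rV[R]_m -> R -> Prop) :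
  (forall x s y t, Q x s -> Q y t -> Q (x + y) (s + t)) ->
  (forall x s a, 0 < a -> Q x s -> Q (a *: x) (a * s)) ->
  (forall x, exists s, Q x s) -> ~ Q 0 1 ->
  exists L : 'rV[R]_m, forall x s, Q x s -> s <= dotr L x.
Proof.
elim: m Q => [|m IH] Q Qadd Qscale Qtotal nQ01.
  exists 0 => x s; rewrite dotr0l (rV0_eq0 x) => Qs; rewrite leNgt; apply/negP => s0.
  have sV : 0 < s^-1 by rewrite invr_gt0.
  by apply: nQ01; have := Qscale _ _ _ sV Qs; rewrite scaler0 mulVf ?gt_eqF.
rewrite -[m.+1]/(1 + m)%N in Q Qadd Qscale Qtotal nQ01 *.
have [L' L'_majorant] : exists L' : 'rV[R]_m, forall x s, Q (row_mx 0 x) s -> s <= dotr L' x.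
  apply: (IH (fun x s => Q (row_mx 0 x) s)) => [x s y t Qx Qy|x s a a0 Qx|x|].
  - by have := Qadd _ _ _ _ Qx Qy; rewrite add_row_mx addr0.
  - by have := Qscale _ _ _ a0 Qx; rewrite scale_row_mx scaler0.
  - exact: Qtotal.
  - by rewrite row_mx0.
have [c Hc] := linear_majorant_extension Qadd Qscale Qtotal L'_majorant.
exists (row_mx (const_mx c) L') => x s.
by rewrite {1 2}(row_mx_lsub_const x) dotr_row_mx dotr_const_mx; apply: Hc.
Qed.

End FiniteHahnBanach.

Section ConeSeparation.
Variable R : realType.

Lemma cone_missing_axis n (P : set 'rV[R]_(1 + n)) :
  (forall x y, P x -> P y -> P (x + y)) ->
  (forall t x, 0 < t -> P x -> P (t *: x)) ->
  (forall x', exists a, P (row_mx (const_mx a) x')) -> ~ (forall u, P u) ->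
  exists sg : R, sg * sg = 1 /\ ~ P (row_mx (const_mx sg) 0).
Proof.
move=> Padd Pscale Pproj nPfull.
pose e c : 'rV[R]_(1 + n) := row_mx (const_mx c) 0.
have eZ c d : e (c * d) = c *: e d.
  by rewrite scale_row_mx scaler0; congr row_mx; apply/rowP => i; rewrite !mxE.
have [P1|] := pselect (P (e 1)); last by exists 1; rewrite mulr1.
have [Pm1|] := pselect (P (e (-1))); last by exists (-1); rewrite mulrNN mulr1.
have Pe c : P (e c).
  have [c0|c0|->] := ltgtP c 0.
  - by rewrite -[c]opprK -mulrN1 eZ; apply: Pscale; rewrite ?oppr_gt0.
  - by rewrite -[c]mulr1 eZ; apply: Pscale.
  - rewrite (_ : e 0 = e 1 + e (-1)); first exact: Padd.
    by rewrite add_row_mx addr0; congr row_mx; apply/rowP => i; rewrite !mxE subrr.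
exfalso; apply: nPfull => u.
have [b Pb] := Pproj (rsubmx u).
rewrite (row_mx_lsub_const u).
rewrite (_ : row_mx _ _ = row_mx (const_mx b) (rsubmx u) + e (lsubmx u 0 0 - b)).
  exact: Padd.
by rewrite add_row_mx addr0; congr row_mx; apply/rowP => i; rewrite !mxE addrC subrK.
Qed.

Lemma cone_separation n (P : set 'rV[R]_n) :
  P 0 -> (forall x y, P x -> P y -> P (x + y)) ->
  (forall t x, 0 < t -> P x -> P (t *: x)) -> ~ (forall u, P u) ->
  exists l, l != 0 /\ forall p, P p -> dotr l p <= 0.
Proof.
elim: n P => [|n IH] P P0 Padd Pscale nPfull.
  by exfalso; apply: nPfull => u; rewrite (rV0_eq0 u).
rewrite -[n.+1]/(1 + n)%N in P P0 Padd Pscale nPfull *.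
pose P' x' := exists a, P (row_mx (const_mx a) x').
have [Pproj|nPproj] := pselect (forall x', P' x'); last first.
  have [|x y [a Pa] [b Pb]|t x t0 [a Pa]|//|l' [l'0 Hl']] := IH P'.
  - by exists 0; rewrite (_ : const_mx 0 = 0) ?row_mx0 //; apply/rowP => i; rewrite !mxE.
  - exists (a + b); have := Padd _ _ Pa Pb; rewrite add_row_mx.
    by congr (P (row_mx _ _)); apply/rowP => i; rewrite !mxE.
  - exists (t * a); have := Pscale _ _ t0 Pa; rewrite scale_row_mx.
    by congr (P (row_mx _ _)); apply/rowP => i; rewrite !mxE.
  exists (row_mx 0 l'); split.
    by apply: contra l'0 => /eqP; rewrite -row_mx0 => /eq_row_mx [_ ->].
  move=> p Pp; rewrite (row_mx_lsub_const p) dotr_row_mx dotr0l add0r; apply: Hl'.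
  by exists (lsubmx p ord0 ord0); rewrite -row_mx_lsub_const.
have [sg [sg2 nPsg]] := cone_missing_axis Padd Pscale Pproj nPfull.
have [L HL] : exists L : 'rV[R]_n,
    forall x s, P (row_mx (const_mx (sg * s)) x) -> s <= dotr L x.
  apply: exists_linear_majorant.
  - move=> x s y t Px Py; have := Padd _ _ Px Py; rewrite add_row_mx.
    by congr (P (row_mx _ _)); apply/rowP => i; rewrite !mxE mulrDr.
  - move=> x s a a0 Px; have := Pscale _ _ a0 Px; rewrite scale_row_mx.
    by congr (P (row_mx _ _)); apply/rowP => i; rewrite !mxE mulrCA.
  - by move=> x; have [a Pa] := Pproj x; exists (sg * a); rewrite mulrA sg2 mul1r.
  - by rewrite mulr1.
exists (row_mx (const_mx sg) (- L)); split.
  apply/negP => /eqP /rowP /(_ (lshift n ord0)); rewrite row_mxEl !mxE => sg0.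
  by move: sg2; rewrite sg0 mulr0 => /eqP; rewrite eq_sym oner_eq0.
move=> p; rewrite {1 2}(row_mx_lsub_const p) dotr_row_mx dotr_const_mx dotrNl => Pp.
have := HL (rsubmx p) (sg * lsubmx p ord0 ord0); rewrite mulrA sg2 mul1r => /(_ Pp).
by rewrite subr_le0.
Qed.

Definition conic_hull n (C : set 'rV[R]_n) :=
  [set p | exists t c, 0 <= t /\ C c /\ p = t *: c].

Lemma conic_hull0 n (C : set 'rV[R]_n) c0 : C c0 -> conic_hull C 0.
Proof. by exists 0, c0; rewrite scale0r lexx. Qed.

Lemma conic_hullD n (C : set 'rV[R]_n) p1 p2 : segment_closed C ->
  conic_hull C p1 -> conic_hull C p2 -> conic_hull C (p1 + p2).
Proof.
move=> cC [t1 [c1 [t10 [Cc1 ->]]]] [t2 [c2 [t20 [Cc2 ->]]]].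
have [t12_0|t12_neq0] := eqVneq (t1 + t2) 0.
  have [-> ->] : t1 = 0 /\ t2 = 0 by split; lra.
  by exists 0, c1; rewrite !scale0r addr0 lexx.
have t12_gt0 : 0 < t1 + t2 by rewrite lt_neqAle eq_sym t12_neq0 addr_ge0.
exists (t1 + t2), ((t1 / (t1 + t2)) *: c1 + (1 - t1 / (t1 + t2)) *: c2).
split; first exact: ltW.
split.
  by apply: cC Cc1 Cc2; rewrite divr_ge0 ?(ltW t12_gt0) //= ler_pdivrMr // mul1r lerDl.
by rewrite scalerDr !scalerA; congr (_ *: _ + _ *: _); field.
Qed.

Lemma conic_hullZ n (C : set 'rV[R]_n) t p :
  0 < t -> conic_hull C p -> conic_hull C (t *: p).
Proof.
move=> t0 [u [c [u0 [Cc ->]]]]; exists (t * u), c.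
by rewrite scalerA mulr_ge0 // ltW.
Qed.

Lemma conic_hull_separation n (C : set 'rV[R]_n) c0 :
  segment_closed C -> C c0 -> ~ (forall p, conic_hull C p) ->
  exists l, l != 0 /\ forall c, C c -> dotr l c <= 0.
Proof.
move=> cC Cc0 nfull.
have [||l [l0 Hl]] := cone_separation (conic_hull0 Cc0) _ _ nfull.
- by move=> p1 p2; apply: conic_hullD.
- by move=> t p; apply: conic_hullZ.
by exists l; split=> // c Cc; apply: Hl; exists 1, c; rewrite scale1r ler01.
Qed.

Lemma conic_hull_full_0 n (C : set 'rV[R]_n) : (0 < n)%N ->
  segment_closed C -> (forall p, conic_hull C p) -> C 0.
Proof.
move=> n_gt0 cC Cfull.
pose e : 'rV[R]_n := const_mx 1.
have e_neq0 : e != 0.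
  by apply/eqP => /rowP /(_ (Ordinal n_gt0)); rewrite !mxE => /eqP; rewrite oner_eq0.
have [t [c [t0 [Cc e_tc]]]] := Cfull e.
have [t' [c' [t'0 [Cc' Ne_tc']]]] := Cfull (- e).
have t_gt0 : 0 < t.
  rewrite lt_neqAle t0 andbT eq_sym; apply: contra e_neq0 => /eqP t_eq0.
  by rewrite e_tc t_eq0 scale0r.
have t'_gt0 : 0 < t'.
  rewrite lt_neqAle t'0 andbT eq_sym; apply: contra e_neq0 => /eqP t'_eq0.
  by rewrite -oppr_eq0 Ne_tc' t'_eq0 scale0r.
have tt'_gt0 : 0 < t + t' by rewrite addr_gt0.
have := cC c c' (t / (t + t')).
have -> : t / (t + t') *: c + (1 - t / (t + t')) *: c' = (t + t')^-1 *: (t *: c + t' *: c').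
  by rewrite scalerDr !scalerA; congr (_ *: _ + _ *: _); field; rewrite gt_eqF.
rewrite -e_tc -Ne_tc' subrr scaler0; apply => //.
by rewrite divr_ge0 ?(ltW t_gt0) ?(ltW tt'_gt0) //= ler_pdivrMr // mul1r lerDl ltW.
Qed.

Lemma nonseparated_absorbing n (C : set 'rV[R]_n) c0 : (0 < n)%N ->
  segment_closed C -> C c0 ->
  ~ (exists l, l != 0 /\ forall c, C c -> dotr l c <= 0) ->
  forall m (q : 'I_m -> 'rV[R]_n), exists rho, 0 < rho /\ forall l, C (rho *: q l).
Proof.
move=> n_gt0 cC Cc0 nsep m q.
have Cfull : forall p, conic_hull C p.
  by apply: contrapT => /(conic_hull_separation cC Cc0).
have C0 := conic_hull_full_0 n_gt0 cC Cfull.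
have /choice [tc Htc] l : exists tc : R * 'rV[R]_n, 0 <= tc.1 /\ C tc.2 /\ q l = tc.1 *: tc.2.
  by have [t [c H]] := Cfull (q l); exists (t, c).
have sum_ge0 : 0 <= \sum_l (tc l).1 by apply: sumr_ge0 => l _; case: (Htc l).
exists (1 + \sum_l (tc l).1)^-1; split; first by rewrite invr_gt0 ltr_wpDr.
move=> l; have [t0 [Cc ->]] := Htc l.
rewrite scalerA; have := cC _ _ ((1 + \sum_l (tc l).1)^-1 * (tc l).1) _ Cc C0.
rewrite scaler0 addr0; apply.
rewrite mulr_ge0 ?invr_ge0 ?addr_ge0 //= mulrC ler_pdivrMr ?ltr_wpDr // mul1r.
rewrite (bigD1 l) //= addrCA lerDl addr_ge0 //.
by apply: sumr_ge0 => i _; case: (Htc i).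
Qed.

Lemma nonseparated_images_absorbing (U W : lmodType R) n (T : set U) (S : set W)
    (F : U -> 'rV[R]_n) (G : W -> 'rV[R]_n) x0 z0 : (0 < n)%N ->
  segment_closed T -> segment_closed S -> affine_map F -> affine_map G ->
  T x0 -> S z0 ->
  ~ (exists l, l != 0 /\ forall x z, T x -> S z -> dotr l (F x) <= dotr l (G z)) ->
  forall m (q : 'I_m -> 'rV[R]_n), exists rho, 0 < rho /\
    exists x : 'I_m -> U, forall l, T (x l) /\ exists2 z, S z & F (x l) - G z = rho *: q l.
Proof.
move=> n_gt0 cT cS FA GA Tx0 Sz0 nsep m q.
pose C := [set a - b | a in F @` T & b in G @` S].
have cC : segment_closed C by apply: segment_closed_sub; apply: segment_closed_image.
have Cx0z0 : C (F x0 - G z0) by exists (F x0); [exists x0 | exists (G z0); [exists z0|]].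
have [|rho [rho_gt0 Crho]] := nonseparated_absorbing n_gt0 cC Cx0z0 _ q.
  move=> [l [l_neq0 Hl]]; apply: nsep; exists l; split=> // x z Tx Sz.
  by rewrite -subr_le0 -dotrB; apply: Hl; exists (F x); [exists x | exists (G z); [exists z|]].
have /choice [x Hx] l : exists x, T x /\ exists2 z, S z & F x - G z = rho *: q l.
  by have [_ [x Tx <-] [_ [z Sz <-] Exz]] := Crho l; exists x; split=> //; exists z.
by exists rho; split=> //; exists x.
Qed.

End ConeSeparation.

Section Simplex.
Context {R : realType} (n : nat).

Lemma normr_entry_le m (x : 'M[R]_(m, n)) i j : `|x i j| <= `|x|.
Proof. by rewrite [leRHS]mx_normrE (bigD1 (i, j)) //= le_max lexx. Qed.

(* [e_l] for [l < n] and [-(1, ..., 1)] for [l = n]: a simplex with [0] in its interior. *)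
Definition simplex_vertex (l : 'I_n.+1) : 'rV[R]_n :=
  \row_m ((val l == val m)%:R - (val l == n)%:R).

Definition simplex_coord (rho : R) (w : 'rV[R]_n) (l : 'I_n.+1) : R :=
  (1 - (\sum_m w ord0 m) / rho) / n.+1%:R +
  oapp (fun i => w ord0 i / rho) 0 (unlift ord_max l).

Lemma simplex_coord_widen rho w (i : 'I_n) :
  simplex_coord rho w (widen_ord (leqnSn n) i) =
  (1 - (\sum_m w ord0 m) / rho) / n.+1%:R + w ord0 i / rho.
Proof.
rewrite /simplex_coord (_ : widen_ord _ i = lift ord_max i) ?liftK //.
by apply/val_inj; rewrite [RHS]lift_max.
Qed.

Lemma simplex_coord_max rho w :
  simplex_coord rho w ord_max = (1 - (\sum_m w ord0 m) / rho) / n.+1%:R.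
Proof. by rewrite /simplex_coord unlift_none addr0. Qed.

Lemma sum_simplex_coord rho w : \sum_l simplex_coord rho w l = 1.
Proof.
rewrite big_ord_recr /= simplex_coord_max.
under eq_bigr => i _ do rewrite simplex_coord_widen.
rewrite big_split /= sumr_const card_ord -mulr_suml.
rewrite -mulr_natr -[n.+1]addn1 natrD; set S := (\sum_m w ord0 m) / rho; field.
by rewrite natr1 pnatr_eq0.
Qed.

Lemma simplex_coordK rho w : rho != 0 ->
  \sum_l simplex_coord rho w l *: (rho *: simplex_vertex l) = w.
Proof.
move=> rho_neq0; apply/rowP => m; rewrite summxE big_ord_recr /= !mxE.
rewrite simplex_coord_max (gtn_eqF (ltn_ord m)) eqxx.
under eq_bigr => i _ do rewrite !mxE simplex_coord_widen /= (ltn_eqF (ltn_ord i)).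
rewrite (bigD1 m) //= eqxx [\sum_(i < n | i != m) _]big1 => [|i im].
  by rewrite subr0 addr0 mulr1 -[w 0 m]/(w ord0 m); set s := _ / n.+1%:R; field.
by move: im; rewrite -val_eqE => /negbTE ->; rewrite subr0 !mulr0.
Qed.

Lemma simplex_coord_ge0 rho w l : 0 < rho ->
  `|w| <= rho / (2 * n + 1)%:R -> 0 <= simplex_coord rho w l.
Proof.
move=> rho_gt0 w_small.
pose e := `|w| / rho.
have e_small : e * (2 * n + 1)%:R <= 1 by rewrite mulrAC ler_pdivrMr // mul1r -ler_pdivlMr.
have sum_le : (\sum_m w ord0 m) / rho <= n%:R * e.
  rewrite mulrA ler_pM2r ?invr_gt0 // mulr_natl -[X in _ *+ X](card_ord n) -sumr_const.
  by apply: ler_sum => m _; apply: le_trans (ler_norm _) (normr_entry_le _ _ _).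
have entry_ge i : - e <= w ord0 i / rho.
  rewrite -mulNr ler_pM2r ?invr_gt0 //.
  by have := normr_entry_le w ord0 i; rewrite ler_norml => /andP[].
apply: (@le_trans _ _ ((1 - n%:R * e) / n.+1%:R - e)).
  rewrite subr_ge0 ler_pdivlMr ?ltr0Sn // -natr1 natrD natrM in e_small *.
  by rewrite natr1; lra.
rewrite /simplex_coord lerD //; first by rewrite ler_pM2r ?invr_gt0 ?ltr0Sn // lerB.
case: (unlift _ l) => [i|] /=; first exact: entry_ge.
by rewrite oppr_le0 divr_ge0 ?normr_ge0 ?(ltW rho_gt0).
Qed.

Lemma aff_hull_simplex (S : set 'rV[R]_n) rho : 0 < rho ->
  (forall l, S (rho *: simplex_vertex l)) -> aff_hull S = setT.
Proof.
move=> rho_gt0 S_vertex; apply/seteqP; split=> // w _.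
exists n.+1, (fun l => rho *: simplex_vertex l), (simplex_coord rho w).
by rewrite sum_simplex_coord simplex_coordK ?gt_eqF.
Qed.

Lemma simplex_rel_int rho : 0 < rho ->
  rel_cball setT (rho / (2 * n + 1)%:R / 2) `<=`
    rel_int setT (conv_hull (fun l => rho *: simplex_vertex l)).
Proof.
move=> rho_gt0 v [_ v_small]; split=> //.
have r_gt0 : 0 < rho / (2 * n + 1)%:R / 2 by rewrite !divr_gt0 // ltr0Sn.
exists (rho / (2 * n + 1)%:R / 2); split=> // w _ wv.
exists (simplex_coord rho w); split; last by rewrite sum_simplex_coord simplex_coordK ?gt_eqF.
move=> l; apply: simplex_coord_ge0 => //.
have : `|w| <= `|w - v| + `|v| by rewrite -{1}(subrK v w) ler_normD.
lra.
Qed.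

Lemma simplex_image_full_dim (X : Type) (T : set X) (F : X -> 'rV[R]_n)
    (h : 'I_n.+1 -> X) rho :
  0 < rho -> (forall l, T (h l)) -> (forall l, F (h l) = rho *: simplex_vertex l) ->
  aff_hull (F @` T) = setT /\ exists d0, 0 < d0 /\
    rel_cball setT d0 `<=` rel_int setT (conv_hull (fun l => F (h l))).
Proof.
move=> rho_gt0 Th Fh; split.
  by apply: (aff_hull_simplex rho_gt0) => l; rewrite -Fh; exists (h l).
exists (rho / (2 * n + 1)%:R / 2); split; first by rewrite !divr_gt0 // ltr0Sn.
rewrite (_ : (fun l => F (h l)) = fun l => rho *: simplex_vertex l); last exact: funext.
exact: simplex_rel_int.
Qed.

End Simplex.

Lemma nonstrict_index_vanish (R : realType) j (f d : 'I_j.+1 -> R) i :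
  f ord0 = 0 -> (forall i, (0 < val i)%N -> f i <= 0) ->
  (forall i, (val i == 0%N) || (f i == 0) -> d i <= 0) ->
  ~~ (((0 < val i)%N && (f i < 0)) || (((val i == 0%N) || (f i == 0)) && (d i < 0))) ->
  f i = 0 /\ d i = 0.
Proof.
move=> f0 f_le0 d_le0; rewrite negb_or negb_and => /andP[not_neg not_active_neg].
have fi0 : f i = 0.
  have [i0|i_neq0] := eqVneq (val i) 0%N; first by rewrite (_ : i = ord0) //; exact: val_inj.
  apply/le_anti; rewrite f_le0 ?lt0n //=.
  by move: not_neg; rewrite lt0n i_neq0 /= -leNgt.
split=> //; apply/le_anti; rewrite d_le0 ?fi0 ?eqxx ?orbT //=.
by move: not_active_neg; rewrite fi0 eqxx orbT /= -leNgt.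
Qed.

Theorem lemma4p1 (R : realType) (X : completeNormedModType R) (E : set X)
  (j k : nat) (phi : 'I_j.+1 -> X -> R) (psi : 'I_k -> X -> R)
  (D2phi : 'I_j.+1 -> X -> R) (D2psi : 'I_k -> X -> R)
  (eb y : X) :
  (0 < k)%N ->
  convex_set (E : set (convex_lmodType X)) ->
  (* eb is a minimizer of (OP) *)
  E eb -> (forall i : 'I_j.+1, (0 < val i)%N -> phi i eb <= 0) ->
  (forall l, psi l eb = 0) ->
  (forall e, E e -> (forall i : 'I_j.+1, (0 < val i)%N -> phi i e <= 0) ->
     (forall l, psi l e = 0) -> phi ord0 eb <= phi ord0 e) ->
  phi ord0 eb = 0 ->
  (* (C5) *)
  (forall i, differentiable (phi i) eb) -> (forall l, differentiable (psi l) eb) ->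
  (forall y' : X, forall alpha C : R, 0 < alpha -> 0 < C ->
     exists eps0 : R, 0 < eps0 /\
     forall (eta : X) (eps : R), `|eta| <= C -> 0 <= eps <= eps0 ->
       (forall i, `|phi i (eb + eps *: y' + eps ^+ 2 *: eta) - phi i eb
          - eps * 'd (phi i) eb y' - eps ^+ 2 * 'd (phi i) eb eta
          - 2^-1 * eps ^+ 2 * D2phi i y'| <= alpha * eps ^+ 2) /\
       (forall l, `|psi l (eb + eps *: y' + eps ^+ 2 *: eta) - psi l eb
          - eps * 'd (psi l) eb y' - eps ^+ 2 * 'd (psi l) eb eta
          - 2^-1 * eps ^+ 2 * D2psi l y'| <= alpha * eps ^+ 2)) ->
  (* assumptions on y *)
  adj_tangent E eb y ->
  (forall i : 'I_j.+1, (val i == 0%N) || (phi i eb == 0) -> 'd (phi i) eb y <= 0) ->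
  (forall l, 'd (psi l) eb y = 0) ->
  (exists w, adj_tangent2 E eb y w) ->
  let IA (i : 'I_j.+1) : bool := (val i == 0%N) || (phi i eb == 0) in
  let IN (i : 'I_j.+1) : bool := (0 < val i)%N && (phi i eb < 0) in
  let I0' (i : 'I_j.+1) : bool := IN i || (IA i && ('d (phi i) eb y < 0)) in
  let I0'' (i : 'I_j.+1) : bool := ~~ I0' i in
  let T2 : set X := [set w | adj_tangent2 E eb y w] in
  let Kpsi_pt (x : X) : 'rV[R]_k :=
    \row_l ('d (psi l) eb x + 2^-1 * D2psi l y) in
  let K_pt (x : X) : 'rV[R]_(j.+1 + k) :=
    row_mx (\row_i (if I0'' i then 'd (phi i) eb x + 2^-1 * D2phi i y else 0))
           (Kpsi_pt x) in
  let K : set 'rV[R]_(j.+1 + k) := K_pt @` T2 in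
  let Kpsi : set 'rV[R]_k := Kpsi_pt @` T2 in
  let Y : 'rV[R]_j.+1 := \row_i (if IA i then 'd (phi i) eb y else 0) in
  let Z : set 'rV[R]_j.+1 :=
    [set z | exists (a : 'rV[R]_j.+1) (lam : R),
       (forall i, a ord0 i < 0) /\ 0 < lam /\
       z = a - lam *: (\row_i phi i eb + Y)] in
  convex_set (K : set (convex_lmodType 'rV[R]_(j.+1 + k))) /\
  convex_set (Kpsi : set (convex_lmodType 'rV[R]_k)) /\
  ((~ exists l : 'rV[R]_(j.+1 + k), l != 0 /\
       forall x z, T2 x -> Z z -> dotr l (K_pt x) <= dotr l (row_mx z 0)) ->
   exists (D : nat) (B : 'M[R]_(D, k)),
     (0 < D)%N /\ row_free B /\
     aff_hull Kpsi = [set v | (v <= B)%MS] /\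
     exists (h : 'I_D.+1 -> X) (d0 : R),
       0 < d0 /\ (forall l, T2 (h l)) /\
       rel_cball (aff_hull Kpsi) d0 `<=`
         rel_int (aff_hull Kpsi) (conv_hull (fun l => Kpsi_pt (h l))) /\
       (forall l i, I0'' i -> 'd (phi i) eb (h l) + 2^-1 * D2phi i y < 0)).
Proof.
move=> k_gt0 Econv _ feas _ _ phi0 _ _ _ _ dphiy _ [w0 Tw0].
move=> IA IN I0' I0'' T2 Kpsi_pt K_pt K Kpsi Y Z.
have T2conv : segment_closed T2 by apply/adj_tangent2_segment_closed/convex_setP.
have Kpsi_aff : affine_map Kpsi_pt := affine_map_row (fun l => affine_map_linear_add _ _).
have K_aff : affine_map K_pt.
  apply: affine_map_row_mx Kpsi_aff; apply: affine_map_row => i.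
  by case: (I0'' i); [exact: affine_map_linear_add | exact: affine_map_cst].
split; first exact/convex_setP/segment_closed_image.
split; first exact/convex_setP/segment_closed_image.
move=> nonsep.
have Zz0 : Z (const_mx (-1) - 1 *: (\row_i phi i eb + Y)).
  by exists (const_mx (-1)), 1; rewrite ltr01; split=> // i; rewrite mxE ltrN10.
have embed_aff : affine_map (fun z : 'rV[R]_j.+1 => row_mx z (0 : 'rV[R]_k)).
  by move=> a b mu; rewrite !scale_row_mx add_row_mx !scaler0 addr0.
have [rho [rho_gt0 [h Hh]]] := nonseparated_images_absorbing (n := j.+1 + k) isT T2conv
  (@segment_closed_orthant_sub_ray _ _ _) K_aff embed_aff Tw0 Zz0 nonsep
  (fun l : 'I_k.+1 => row_mx 0 (simplex_vertex l) : 'rV[R]_(j.+1 + k)).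
have hT l : T2 (h l) := (Hh l).1.
have h_parts (l : 'I_k.+1) : Kpsi_pt (h l) = rho *: simplex_vertex l /\
    forall i, I0'' i -> 'd (phi i) eb (h l) + 2^-1 * D2phi i y < 0.
  have [_ [z [a [lam [a_neg [_ ->]]]]]] := Hh l.
  rewrite /K_pt opp_row_mx add_row_mx scale_row_mx scaler0 oppr0 addr0.
  move=> /eq_row_mx [/rowP Ephi ->]; split=> // i Ii; move: (Ephi i).
  have [phi_i0 dphi_i0] := nonstrict_index_vanish (f := fun i => phi i eb)
    (d := fun i => 'd (phi i) eb y) phi0 feas dphiy Ii.
  rewrite !mxE Ii phi_i0 dphi_i0 if_same addr0 mulr0 subr0 => /eqP.
  by rewrite subr_eq0 => /eqP ->; exact: a_neg.
have [aff_full [d0 [d0_gt0 ball_sub]]] := simplex_image_full_dim (T := T2) (F := Kpsi_pt)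
  rho_gt0 hT (fun l => (h_parts l).1).
exists k, 1%:M; rewrite aff_full; split=> //; split; first by rewrite row_free_unit unitmx1.
split; first by apply/seteqP; split=> v _ //=; rewrite submx1.
by exists h, d0; do 3!split=> //; move=> l; exact: (h_parts l).2.
Qed.
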